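(* Let $R$ be a commutative ring and $S$ a multiplicative subset of $R$ satisfying the maximal multiple condition. Then the following are equivalent: (1) $R$ is a uniformly $S$-Noetherian ring; (2) $R$ is an $S$-Noetherian ring; (3) the localization $R_S$ is a Noetherian ring.
   Context: Rings are commutative with identity. $S$ satisfies the maximal multiple condition if there is $s\in S$ such that every $t\in S$ divides $s$ in $R$. $R$ is $S$-Noetherian if for every ideal $I$ there are a finitely generated ideal $K\subseteq I$ and $s\in S$ (possibly depending on $I$) with $sI\subseteq K$. $R$ is uniformly $S$-Noetherian if there is a single $s\in S$ such that for every ideal $I$ there is a finitely generated ideal $K\subseteq I$ with $sI\subseteq K$. *)

From HB Require Import structures.
From mathcomp Require Import all_boot all_order all_algebra.
Set Implicit Arguments. Unset Strict Implicit. Unset Printing Implicit Defensive.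
Import GRing.Theory.
Local Open Scope ring_scope.

Definition is_ideal (R : comPzRingType) (I : R -> Prop) : Prop :=
  [/\ I 0, (forall x y, I x -> I y -> I (x + y)) & (forall r x, I x -> I (r * x))].

Definition ideal_span (R : comPzRingType) (l : seq R) : R -> Prop :=
  fun x => exists c : 'I_(size l) -> R, x = \sum_(i < size l) c i * l`_i.

Definition fg_ideal (R : comPzRingType) (K : R -> Prop) : Prop :=
  exists l : seq R, forall x, K x <-> ideal_span l x.

Definition mult_subset (R : comPzRingType) (S : R -> Prop) : Prop :=
  S 1 /\ (forall s t, S s -> S t -> S (s * t)).

Definition maximal_multiple_condition (R : comPzRingType) (S : R -> Prop) : Prop :=
  exists2 s, S s & forall t, S t -> exists r : R, s = r * t.

Definition noetherian (R : comPzRingType) : Prop :=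
  forall I : R -> Prop, is_ideal I -> fg_ideal I.

Definition S_noetherian (R : comPzRingType) (S : R -> Prop) : Prop :=
  forall I : R -> Prop, is_ideal I ->
    exists2 s, S s & exists K : R -> Prop,
      [/\ is_ideal K, fg_ideal K, (forall x, K x -> I x) & (forall x, I x -> K (s * x))].

Definition uniformly_S_noetherian (R : comPzRingType) (S : R -> Prop) : Prop :=
  exists2 s, S s & forall I : R -> Prop, is_ideal I ->
    exists K : R -> Prop,
      [/\ is_ideal K, fg_ideal K, (forall x, K x -> I x) & (forall x, I x -> K (s * x))].

Definition is_localization (R T : comPzRingType) (S : R -> Prop)
  (f : {rmorphism R -> T}) : Prop :=
  [/\ (forall s, S s -> exists u : T, f s * u = 1),
      (forall z : T, exists r s, S s /\ z * f s = f r) &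
      (forall x y, f x = f y -> exists2 c, S c & c * x = c * y)].

(* The extension of an ideal [I] of [R] to [R_S] contracts back into [I] up to
   a factor from [S], and every ideal of [R_S] is the extension of its
   contraction; so finite generation passes between [R_S] and [R] "up to [S]".
   The element given by the maximal multiple condition is a multiple of every
   such factor, which makes the [S]-finiteness uniform. *)

From HB Require Import structures.
From mathcomp Require Import all_boot all_order all_algebra.
From mathcomp Require Import ring.
Set Implicit Arguments.
Unset Strict Implicit.
Unset Printing Implicit Defensive.
Import GRing.Theory.
Local Open Scope ring_scope.

Lemma seq_choice (A B : Type) (a0 : A) (b0 : B) (Q : A -> B -> Prop) (l : seq A) :
  (forall i, (i < size l)%N -> exists b, Q (nth a0 l i) b) ->
  exists l' : seq B, size l' = size l /\
    forall i, (i < size l)%N -> Q (nth a0 l i) (nth b0 l' i).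
Proof.
elim: l => [|a l IHl] HQ; first by exists [::].
have [b Hb] := HQ 0%N isT.
have [l' [size_l' Hl']] : exists l' : seq B, size l' = size l /\
    forall i, (i < size l)%N -> Q (nth a0 l i) (nth b0 l' i).
  by apply: IHl => i Hi; exact: (HQ i.+1).
exists (b :: l'); split => [/=|[|i] Hi //]; first by rewrite size_l'.
exact: Hl'.
Qed.

Section Ideals.
Variable R : comPzRingType.
Implicit Types (I K : R -> Prop) (l : seq R).

Lemma ideal_spanE l x :
  ideal_span l x <-> exists c : nat -> R, x = \sum_(i < size l) c i * l`_i.
Proof.
split=> [[c ->]|[c ->]]; last by exists (fun i => c (val i)).
exists (fun k => odflt 0 (omap c (insub k))).
by apply: eq_bigr => i _; rewrite valK.
Qed.

Lemma ideal_sum I n (F : 'I_n -> R) :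
  is_ideal I -> (forall i, I (F i)) -> I (\sum_(i < n) F i).
Proof. by move=> [I0 ID _] HF; apply: (big_ind I). Qed.

Lemma ideal_span_ideal l : is_ideal (ideal_span l).
Proof.
split.
- by exists (fun _ => 0); rewrite big1 // => i _; rewrite mul0r.
- move=> x y [c ->] [d ->]; exists (fun i => c i + d i).
  by rewrite -big_split; apply: eq_bigr => i _; rewrite mulrDl.
- move=> r x [c ->]; exists (fun i => r * c i).
  by rewrite mulr_sumr; apply: eq_bigr => i _; rewrite mulrA.
Qed.

Lemma ideal_span_fg l : fg_ideal (ideal_span l).
Proof. by exists l. Qed.

Lemma mem_ideal_span l i : (i < size l)%N -> ideal_span l l`_i.
Proof.
move=> Hi; apply/ideal_spanE; exists (fun k => (k == i)%:R).
rewrite (bigD1 (Ordinal Hi)) //= eqxx mul1r big1 ?addr0 // => j Hj.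
by rewrite -(inj_eq val_inj) /= in Hj; rewrite (negbTE Hj) mul0r.
Qed.

Lemma ideal_span_min I l : is_ideal I ->
  (forall i, (i < size l)%N -> I l`_i) -> forall x, ideal_span l x -> I x.
Proof.
move=> HI Hl x [c ->]; apply: ideal_sum => // i.
by case: HI => _ _ IM; apply/IM/Hl.
Qed.

End Ideals.

Lemma ideal_span_map (R T : comPzRingType) (f : {rmorphism R -> T}) l x :
  ideal_span l x -> ideal_span (map f l) (f x).
Proof.
move=> /ideal_spanE [c ->]; apply/ideal_spanE; exists (fun i => f (c i)).
rewrite size_map rmorph_sum; apply: eq_bigr => i _.
by rewrite rmorphM (nth_map 0).
Qed.

Lemma preim_ideal (R T : comPzRingType) (f : {rmorphism R -> T}) (J : T -> Prop) :
  is_ideal J -> is_ideal (fun x => J (f x)).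
Proof.
move=> [J0 JD JM]; split=> [|x y|r x]; rewrite ?rmorph0 ?rmorphD ?rmorphM //.
exact: JD.
exact: JM.
Qed.

Section MaximalMultiple.
Variables (R : comPzRingType) (S : R -> Prop) (s0 : R).
Hypothesis s0_multiple : forall t, S t -> exists r : R, s0 = r * t.

Lemma mmc_mul_mem K x c : is_ideal K -> S c -> K (c * x) -> K (s0 * x).
Proof.
move=> [_ _ KM] Sc Kcx; have [r ->] := s0_multiple Sc.
by rewrite -mulrA; apply: KM.
Qed.

Lemma S_noetherian_uniform : S s0 -> S_noetherian S -> uniformly_S_noetherian S.
Proof.
move=> Ss0 HS; exists s0 => // I HI.
have [s Ss [K [Kid Kfg KI IK]]] := HS I HI.
by exists K; split => // x /IK; apply: mmc_mul_mem.
Qed.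

End MaximalMultiple.

Lemma uniformly_S_noetherianW (R : comPzRingType) (S : R -> Prop) :
  uniformly_S_noetherian S -> S_noetherian S.
Proof. by move=> [s Ss HS] I HI; exists s => //; apply: HS. Qed.

Section Localization.
Variables (R T : comPzRingType) (S : R -> Prop) (f : {rmorphism R -> T}).
Hypothesis S_mult : mult_subset S.
Hypothesis f_loc : is_localization S f.

Definition extension (I : R -> Prop) : T -> Prop :=
  fun z => exists x t, [/\ I x, S t & z * f t = f x].

Lemma extension_ideal I : is_ideal I -> is_ideal (extension I).
Proof.
case: S_mult => S1 SM; case: f_loc => _ Hfrac _; move=> [I0 ID IM]; split.
- by exists 0, 1; rewrite rmorph0 rmorph1 mul0r.
- move=> z1 z2 [x1 [t1 [I1 S1' E1]]] [x2 [t2 [I2 S2 E2]]].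
  exists (t2 * x1 + t1 * x2), (t1 * t2); split; auto.
  by rewrite rmorphD !rmorphM -E1 -E2; ring.
- move=> r z [x [t [Ix St E]]]; have [r' [t' [St' E']]] := Hfrac r.
  exists (r' * x), (t' * t); split; auto.
  by rewrite !rmorphM -E -E'; ring.
Qed.

Lemma extension_mem I x : I x -> extension I (f x).
Proof.
by case: S_mult => S1 _ Ix; exists x, 1; rewrite rmorph1 mulr1.
Qed.

Lemma extension_contract K x : is_ideal K -> extension K (f x) ->
  exists2 c, S c & K (c * x).
Proof.
case: S_mult => _ SM; case: f_loc => _ _ Hker; move=> [_ _ KM] [y [t [Ky St E]]].
rewrite -rmorphM in E; have [c Sc Ec] := Hker _ _ E.
by exists (c * t); [apply: SM | rewrite mulrAC -mulrA Ec; apply: KM].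
Qed.

Lemma ideal_sub_extension_preim (J : T -> Prop) z :
  is_ideal J -> J z -> extension (fun x => J (f x)) z.
Proof.
case: f_loc => _ Hfrac _; move=> [_ _ JM] Jz; have [r [t [St E]]] := Hfrac z.
by exists r, t; split => //; rewrite -E mulrC; apply: JM.
Qed.

Lemma S_noetherian_localization : S_noetherian S -> noetherian T.
Proof.
case: S_mult => _ SM; case: f_loc => Hunit _ _.
move=> HS J HJ.
have [s Ss [K [_ [l Hl] KI IK]]] := HS _ (preim_ideal f HJ).
exists (map f l) => z; split; last first.
  apply: ideal_span_min => // i; rewrite size_map => Hi; rewrite (nth_map 0) //.
  by apply: KI; apply/Hl; apply: mem_ideal_span.
move=> /(ideal_sub_extension_preim HJ) [r [t [Jr St E]]].
have /Hl /(ideal_span_map f) Lsr := IK r Jr.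
have [u Hu] := Hunit _ (SM _ _ Ss St).
have -> : z = u * f (s * r) by rewrite rmorphM -E -[LHS]mulr1 -Hu rmorphM; ring.
by case: (ideal_span_ideal (map f l)) => _ _; apply.
Qed.

Lemma noetherian_localization_S_span I : noetherian T -> is_ideal I ->
  exists l, (forall i, (i < size l)%N -> I l`_i) /\
    forall x, I x -> exists2 c, S c & ideal_span l (c * x).
Proof.
move=> HT HI; have [l Hl] := HT _ (extension_ideal HI).
have gens : forall i, (i < size l)%N ->
    exists x, I x /\ exists t, S t /\ l`_i * f t = f x.
  by move=> i /mem_ideal_span /Hl [x [t [Ix St E]]]; exists x; split => //; exists t.
have [X [size_X HX]] := @seq_choice _ _ 0 0
  (fun z x => I x /\ exists t, S t /\ z * f t = f x) l gens.
exists X; split=> [i|x /extension_mem /Hl Lx]; first by rewrite size_X => /HX [].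
apply: extension_contract; first exact: ideal_span_ideal.
apply: ideal_span_min Lx; first exact/extension_ideal/ideal_span_ideal.
move=> i Hi; have [_ [t [St E]]] := HX i Hi.
by exists X`_i, t; split => //; apply: mem_ideal_span; rewrite size_X.
Qed.

Lemma localization_noetherian_uniform :
  maximal_multiple_condition S -> noetherian T -> uniformly_S_noetherian S.
Proof.
move=> [s0 Ss0 Hs0] HT; exists s0 => // I HI.
have [l [lI l_span]] := noetherian_localization_S_span HT HI.
exists (ideal_span l); split.
- exact: ideal_span_ideal.
- exact: ideal_span_fg.
- exact: ideal_span_min.
- move=> x /l_span [c Sc Lcx].
  exact: mmc_mul_mem Hs0 _ _ _ (ideal_span_ideal l) Sc Lcx.
Qed.

End Localization.

Theorem proposition2p5 (R : comPzRingType) (S : R -> Prop)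
  (T : comPzRingType) (f : {rmorphism R -> T}) :
  mult_subset S -> maximal_multiple_condition S -> is_localization S f ->
  [/\ (uniformly_S_noetherian S <-> S_noetherian S),
      (S_noetherian S <-> noetherian T) &
      (uniformly_S_noetherian S <-> noetherian T)].
Proof.
move=> HS Hmmc Hloc; have [s0 Ss0 Hs0] := Hmmc.
have U_S : uniformly_S_noetherian S <-> S_noetherian S.
  split; first exact: uniformly_S_noetherianW.
  exact: S_noetherian_uniform Hs0 Ss0.
have U_T : uniformly_S_noetherian S <-> noetherian T.
  split; last exact: localization_noetherian_uniform HS Hloc Hmmc.
  by move/uniformly_S_noetherianW; apply: S_noetherian_localization HS Hloc.
split=> //; split=> [HSN | HT].
- exact: (proj1 U_T) ((proj2 U_S) HSN).
- exact: (proj1 U_S) ((proj2 U_T) HT).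
Qed.
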